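(* Let $d\ge1$, $a$, $b$ be integers and $x_0$ a real number. If for every $x\le x_0$ $$\pi(x;d,a)\ge\pi(x;d,b)\qquad\text{and}\qquad\sum_{\substack{1<p^r\le x\\ p\equiv a\ (\mathrm{mod}\ d)}}\log p\ge\sum_{\substack{1<p^r\le x\\ p\equiv b\ (\mathrm{mod}\ d)}}\log p,$$ then $\lambda_{d,a}(x)\ge\lambda_{d,b}(x)$ for every $x\le x_0$.
   Context: $p$ runs over primes and $r$ over positive integers. $\pi(x;d,a)$ is the number of primes $p\le x$ with $p\equiv a\pmod d$. Let $S_{d,a}$ be the set of positive integers all of whose prime divisors $p$ satisfy $p\equiv a\pmod d$ (including $1$), and $\lambda_{d,a}(x)=\sum_{n\le x,\ n\in S_{d,a}}\log n$ (in the paper $\lambda_{g_{d,a}}(x)$, with $g_{d,a}$ the indicator of $S_{d,a}$). *)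

From mathcomp Require Import all_boot.
From Stdlib Require Import Reals ZArith.

Set Implicit Arguments.

Definition congr (d a : Z) (p : nat) : bool :=
  Z.eqb (Z.modulo (Z.of_nat p) d) (Z.modulo a d).

Fixpoint rsum_upto (N : nat) (f : nat -> R) : R :=
  match N with
  | O => f O
  | S k => Rplus (rsum_upto k f) (f (S k))
  end.

(* Number of integers n <= x (x real); 0 for x < 0 is handled by the
   indicator (n <= x) inside each sum, summing n over 0 .. |floor x|. *)
Definition upto (x : R) : nat := Z.to_nat (up (Rabs x)).

Definition le_x (n : nat) (x : R) : bool :=
  if Rle_dec (INR n) x then true else false.

Definition pi_ap (x : R) (d a : Z) : R :=
  rsum_upto (upto x) (fun n =>
    if [&& le_x n x, prime n & congr d a n] then 1%R else 0%R).

(* n is a prime power p^r with r >= 1 exactly when it has exactly one prime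
   divisor; then p = the unique element of primes n. *)
Definition ppow_base (n : nat) : option nat :=
  match primes n with
  | [:: p] => Some p
  | _ => None
  end.

Definition theta_ap (x : R) (d a : Z) : R :=
  rsum_upto (upto x) (fun n =>
    match ppow_base n with
    | Some p => if le_x n x && congr d a p then ln (INR p) else 0%R
    | None => 0%R
    end).

Definition in_S (d a : Z) (n : nat) : bool :=
  leq 1 n && all (congr d a) (primes n).

Definition lambda_ap (x : R) (d a : Z) : R :=
  rsum_upto (upto x) (fun n =>
    if le_x n x && in_S d a n then ln (INR n) else 0%R).

From mathcomp Require Import all_boot.
From Stdlib Require Import Reals ZArith Lia Lra.
(* Reals shadows the nat-scope notations of ssrnat; importing it again restores them. *)
From mathcomp Require Import ssrnat zify.

(* For a set of primes A let Theta_A(y) = prod_{p^r <= y, p in A} p and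
   Lambda_A(N) = prod_{n <= N, n in S_A} n; the prime-power sum of the statement and
   lambda are their logarithms.  Factoring every n in S_A into prime powers gives
   Lambda_A(N) = prod_{p^r <= N, p in A} p ^ C_A(p^r) with C_A(k) = #{m in S_A | k m <= N},
   and exchanging the two products,
   prod_{m in S_A, m <= N} Theta_B(N / m) = prod_{p^r <= N, p in B} p ^ C_A(p^r).
   If pi_B <= pi_A on [0, N], sending the j-th prime of B to the j-th prime of A, which is
   not larger, and extending multiplicatively injects {m in S_B | k m <= N} into
   {m in S_A | k m <= N}; hence C_B <= C_A and
   Lambda_B(N) <= prod_{p^r, p in B} p ^ C_A(p^r) = prod_{m in S_A} Theta_B(N / m)
              <= prod_{m in S_A} Theta_A(N / m) = Lambda_A(N). *)

Set Implicit Arguments.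
Unset Strict Implicit.
Unset Printing Implicit Defensive.

Lemma logn_prod (I : Type) (r : seq I) (P : pred I) (F : I -> nat) q :
  (forall i, P i -> 0 < F i) ->
  logn q (\prod_(i <- r | P i) F i) = \sum_(i <- r | P i) logn q (F i).
Proof.
move=> F_gt0; elim: r => [|i r IHr]; first by rewrite !big_nil logn1.
rewrite !big_cons; case: ifP => // P_i.
by rewrite lognM ?IHr ?F_gt0 // prodn_cond_gt0.
Qed.

Lemma prodn_const_seq (I : Type) (r : seq I) (P : pred I) c :
  \prod_(i <- r | P i) c = c ^ (\sum_(i <- r | P i) 1).
Proof. by rewrite big_const_seq iter_muln_1 sum1_count. Qed.

Lemma prod_exchange_pow (P Q : pred nat) (R : rel nat) (c : nat -> nat) n :
  \prod_(0 <= m < n | P m) \prod_(0 <= k < n | Q k && R k m) c k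
  = \prod_(0 <= k < n | Q k) c k ^ (\sum_(0 <= m < n | P m && R k m) 1).
Proof.
under eq_bigr do rewrite big_mkcondr.
rewrite exchange_big_nat; apply: eq_bigr => k _.
by rewrite -big_mkcondr prodn_const_seq.
Qed.

Lemma sum1_leq_inj n (P Q : pred nat) (f : nat -> nat) :
  (forall m, m < n -> P m -> (f m < n) && Q (f m)) ->
  {in [pred m | (m < n) && P m] &, injective f} ->
  \sum_(0 <= m < n | P m) 1 <= \sum_(0 <= m < n | Q m) 1.
Proof.
move=> f_into f_inj; rewrite !sum1_count -!size_filter -(size_map f).
apply: uniq_leq_size => [|z /mapP[m]].
  rewrite map_inj_in_uniq ?filter_uniq ?iota_uniq //.
  by apply: sub_in2 f_inj => m; rewrite mem_filter mem_index_iota inE andbC.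
rewrite mem_filter mem_index_iota => /andP[P_m lt_mn] ->.
by rewrite mem_filter mem_index_iota /=; case/andP: (f_into m lt_mn P_m) => -> ->.
Qed.

Lemma logn_prod_primes m (f : nat -> nat) r : {in primes m, forall q, prime (f q)} ->
  logn r (\prod_(q <- primes m) f q ^ logn q m) = \sum_(q <- primes m) logn q m * (r == f q).
Proof.
move=> f_prime; rewrite big_seq logn_prod => [|q /f_prime/prime_gt0 fq_gt0]; last first.
  by rewrite expn_gt0 fq_gt0.
by rewrite [RHS]big_seq; apply: eq_bigr => q /f_prime pr_fq; rewrite lognX (logn_prime r pr_fq).
Qed.

Lemma prod_primes_logn m : 0 < m -> \prod_(q <- primes m) q ^ logn q m = m.
Proof. by move=> m_gt0; rewrite [RHS](prod_prime_decomp m_gt0) prime_decompE big_map. Qed.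

(** * Prime powers and the factorisation of Lambda *)

Definition ppow_prime k := if ppow_base k is Some p then p else 1.

Definition ppow_in (A : nat_pred) k :=
  if ppow_base k is Some p then p \in A else false.

Lemma ppow_baseP k p : ppow_base k = Some p <-> prime p /\ exists e, k = p ^ e.+1.
Proof.
split=> [|[pr_p [e ->]]]; last by rewrite /ppow_base primesX // primes_prime.
rewrite /ppow_base; case def_k: (primes k) => [|q []] // [<-].
have q_k : q \in primes k by rewrite def_k mem_head.
move: (q_k); rewrite mem_primes => /and3P[pr_q k_gt0 _].
split=> //; exists (logn q k).-1.
rewrite prednK ?logn_gt0 //.
by rewrite -p_part part_pnat_id // /pnat k_gt0 def_k /= inE eqxx.
Qed.

Lemma ppow_prime_gt0 k : 0 < ppow_prime k.
Proof.
rewrite /ppow_prime; case def_k: (ppow_base k) => [p|] //.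
by case/ppow_baseP: def_k => /prime_gt0.
Qed.

Lemma ppow_in_pnat A k : ppow_in A k -> A.-nat k.
Proof.
rewrite /ppow_in; case def_k: (ppow_base k) => [p|] // A_p.
by case/ppow_baseP: def_k => pr_p [e ->]; rewrite pnatX pnatE // A_p.
Qed.

Lemma count_ppow_dvd r n N : 0 < n -> n <= N ->
  \sum_(0 <= k < N.+1 | (ppow_base k == Some r) && (k %| n)) 1 = logn r n.
Proof.
move=> n_gt0 le_nN; have [pr_r | npr_r] := boolP (prime r); last first.
  rewrite lognE (negbTE npr_r) big1 // => k /andP[/eqP/ppow_baseP[pr_r _] _].
  by rewrite pr_r in npr_r.
rewrite sum1_count -size_filter -[logn r n](size_iota 1) -(size_map (expn r) (iota 1 _)).
apply: perm_size; apply: uniq_perm.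
- by rewrite filter_uniq // iota_uniq.
- by rewrite (map_inj_uniq (expnI (prime_gt1 pr_r))) iota_uniq.
move=> k; rewrite mem_filter mem_index_iota; apply/idP/mapP.
  case/andP=> /andP[/eqP/ppow_baseP[_ [e ->]] dvd_k] _; exists e.+1 => //.
  by rewrite mem_iota /= add1n ltnS -pfactor_dvdn.
case=> -[|e]; rewrite mem_iota //= add1n ltnS => le_e ->.
have dvd_k : r ^ e.+1 %| n by rewrite pfactor_dvdn.
rewrite dvd_k ltnS (leq_trans (dvdn_leq n_gt0 dvd_k)) // !andbT.
by apply/eqP/ppow_baseP; split; last exists e.
Qed.

Lemma pnat_prod_ppow A n N : A.-nat n -> n <= N ->
  n = \prod_(0 <= k < N.+1 | ppow_in A k && (k %| n)) ppow_prime k.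
Proof.
move=> A_n le_nN; have n_gt0 : 0 < n by case/andP: A_n.
apply: eqn_from_log => // [|r]; first exact: prodn_cond_gt0 (fun k _ => ppow_prime_gt0 k).
rewrite logn_prod => [|k _]; last exact: ppow_prime_gt0.
rewrite -(count_ppow_dvd r n_gt0 le_nN) big_mkcond [RHS]big_mkcond /=.
apply: eq_bigr => k _; rewrite /ppow_in /ppow_prime.
case def_k: (ppow_base k) => [p|] //=; have [pr_p [e def_k']] := (ppow_baseP k p).1 def_k.
have [k_n | _] := boolP (k %| n); rewrite ?andbF //= !andbT.
have p_A : p \in A.
  apply: (pnatPpi A_n); rewrite mem_primes pr_p n_gt0 (dvdn_trans _ k_n) //.
  by rewrite def_k' dvdn_exp.
by rewrite p_A logn_prime // eq_sym.
Qed.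

Definition theta_prod (A : nat_pred) n := \prod_(0 <= k < n.+1 | ppow_in A k) ppow_prime k.

Definition lambda_prod (A : nat_pred) n := \prod_(0 <= m < n.+1 | A.-nat m) m.

Definition mul_count (A : nat_pred) k n := \sum_(0 <= m < n.+1 | A.-nat m && (k * m <= n)) 1.

Lemma count_dvd_mul_count A k n : ppow_in A k ->
  \sum_(0 <= m < n.+1 | A.-nat m && (k %| m)) 1 = mul_count A k n.
Proof.
move=> A_k; have k_A := ppow_in_pnat A_k; have k_gt0 : 0 < k by case/andP: k_A.
apply/eqP; rewrite eqn_leq; apply/andP; split.
  apply: (sum1_leq_inj (f := divn^~ k)) => [m lt_mn /andP[A_m k_m] | m m'].
    by rewrite (leq_ltn_trans (leq_div m k)) // (pnat_dvd (dvdn_div k_m)) // mulnC divnK.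
  move=> /andP[_ /andP[_ k_m]] /andP[_ /andP[_ k_m']] eq_div.
  by rewrite -(divnK k_m) -(divnK k_m') eq_div.
apply: (sum1_leq_inj (f := muln k)) => [m _ /andP[A_m le_kmn] | m m' _ _ /eqP].
  by rewrite ltnS le_kmn pnatM k_A A_m dvdn_mulr.
by rewrite eqn_pmul2l // => /eqP.
Qed.

Lemma lambda_prod_ppow A n :
  lambda_prod A n = \prod_(0 <= k < n.+1 | ppow_in A k) ppow_prime k ^ mul_count A k n.
Proof.
have -> : lambda_prod A n = \prod_(0 <= m < n.+1 | A.-nat m)
                              \prod_(0 <= k < n.+1 | ppow_in A k && (k %| m)) ppow_prime k.
  rewrite /lambda_prod big_nat_cond [RHS]big_nat_cond.
  by apply: eq_bigr => m /andP[/andP[_ lt_mn] A_m]; apply: pnat_prod_ppow.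
by rewrite prod_exchange_pow; apply: eq_bigr => k A_k; rewrite count_dvd_mul_count.
Qed.

Lemma prod_theta_prod A B n :
  \prod_(0 <= m < n.+1 | A.-nat m) theta_prod B (n %/ m)
  = \prod_(0 <= k < n.+1 | ppow_in B k) ppow_prime k ^ mul_count A k n.
Proof.
rewrite /mul_count -(prod_exchange_pow _ _ (fun k m => k * m <= n)).
apply: eq_bigr => m /andP[m_gt0 _].
rewrite /theta_prod (big_nat_widen _ (n %/ m).+1 n.+1) ?ltnS ?leq_div //.
by apply: eq_bigl => k; rewrite ltnS leq_divRL.
Qed.

(** * Transporting S_B into S_A *)

Definition prime_count (A : nat_pred) n := \sum_(0 <= p < n.+1 | prime p && (p \in A)) 1.

Lemma prime_countS A n :
  prime_count A n.+1 = prime_count A n + (prime n.+1 && (n.+1 \in A)).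
Proof. by rewrite /prime_count big_mkcond big_nat_recr //= -big_mkcond. Qed.

Lemma prime_count_leq A m n : m <= n -> prime_count A m <= prime_count A n.
Proof.
by move=> le_mn; rewrite /prime_count (big_cat_nat (leq0n m.+1) (le_mn : m < n.+1)) leq_addr.
Qed.

Lemma prime_count_lt A p q :
  prime p -> p \in A -> q < p -> prime_count A q < prime_count A p.
Proof.
case: p => // p pr_p p_A lt_qp.
by rewrite prime_countS pr_p p_A addn1 ltnS prime_count_leq.
Qed.

Lemma prime_count_reaches A j n : 0 < j <= prime_count A n ->
  exists2 p, p <= n & [&& prime p, p \in A & prime_count A p == j].
Proof.
elim: n => [|n IHn] /andP[j_gt0 le_jn].
  by move: le_jn; rewrite /prime_count big_mkcond big_nat1 leqNgt j_gt0.
have [le_jn' | lt_nj] := leqP j (prime_count A n).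
  by have [p le_pn p_j] := IHn (introT andP (conj j_gt0 le_jn')); exists p; rewrite ?leqW.
move: le_jn; rewrite prime_countS; case: andP => [[pr_n1 n1_A] | _] le_jn; last first.
  by rewrite addn0 leqNgt lt_nj in le_jn.
by exists n.+1; rewrite // pr_n1 n1_A prime_countS pr_n1 n1_A /=; apply/eqP; lia.
Qed.

Definition prime_with_count (A : nat_pred) j n :=
  find (fun p => [&& prime p, p \in A & prime_count A p == j]) (iota 0 n.+1).

Lemma prime_with_countP A j n (p := prime_with_count A j n) :
  0 < j <= prime_count A n -> [/\ prime p, p \in A & prime_count A p = j].
Proof.
case/prime_count_reaches=> q le_qn q_j.
have has_j : has (fun p => [&& prime p, p \in A & prime_count A p == j]) (iota 0 n.+1).
  by apply/hasP; exists q; rewrite // mem_iota ltnS le_qn.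
have := nth_find 0 has_j; rewrite nth_iota ?add0n; last by move: has_j; rewrite has_find size_iota.
by case/and3P=> ? ? /eqP.
Qed.

Section MultiplicativeTransfer.

Variables (S : nat_pred) (phi : nat -> nat).
Hypothesis phi_prime : {in S, forall q, prime (phi q)}.

Definition transfer m := \prod_(q <- primes m) phi q ^ logn q m.

Lemma pnat_transfer A m : {in S, forall q, phi q \in A} -> S.-nat m -> A.-nat (transfer m).
Proof.
move=> phi_A S_m; rewrite /transfer big_seq; apply: (big_ind (pnat A)) => [//|a b A_a A_b|q q_m].
  by rewrite pnatM A_a A_b.
have S_q : q \in S by apply: pnatPpi S_m q_m.
by rewrite pnatX pnatE ?phi_A ?phi_prime.
Qed.

Lemma transfer_leq m : {in S, forall q, phi q <= q} -> S.-nat m -> transfer m <= m.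
Proof.
move=> phi_le S_m; have m_gt0 : 0 < m by case/andP: S_m.
rewrite -[leqRHS](prod_primes_logn m_gt0) /transfer big_seq [leqRHS]big_seq.
apply: leq_prod => q q_m; rewrite leq_exp2r ?logn_gt0 // phi_le //.
exact: pnatPpi S_m q_m.
Qed.

Hypothesis phi_inj : {in S &, injective phi}.

Lemma logn_transfer m q : S.-nat m -> q \in S -> logn (phi q) (transfer m) = logn q m.
Proof.
move=> S_m S_q; have m_gt0 : 0 < m by case/andP: S_m.
have S_primes : {subset primes m <= S} by move=> q'; apply: pnatPpi.
rewrite logn_prod_primes => [|q' /S_primes/phi_prime //].
rewrite -[in RHS](prod_primes_logn m_gt0) (logn_prod_primes (f := fun q => q)) => [|q']; last first.
  by rewrite mem_primes => /andP[].
by apply: eq_big_seq => q' /S_primes S_q'; rewrite (inj_in_eq phi_inj).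
Qed.

Lemma transfer_inj m m' : S.-nat m -> S.-nat m' -> transfer m = transfer m' -> m = m'.
Proof.
move=> S_m S_m' eq_mm'.
apply: eqn_from_log => [||r]; [by case/andP: S_m | by case/andP: S_m' |].
have [S_r | S'_r] := boolP (r \in S).
  by rewrite -(logn_transfer S_m S_r) -(logn_transfer S_m' S_r) eq_mm'.
have logn_r0 n : S.-nat n -> logn r n = 0.
  move=> S_n; apply/eqP; rewrite -leqn0 leqNgt logn_gt0.
  by apply: contra S'_r; apply: pnatPpi.
by rewrite !logn_r0.
Qed.

End MultiplicativeTransfer.

Section PrimeCountDomination.

Variables (A B : nat_pred) (N : nat).
Hypothesis count_dom : forall m, m <= N -> prime_count B m <= prime_count A m.

Let S : nat_pred := [pred q | [&& prime q, q \in B & q <= N]].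

Let phi q := prime_with_count A (prime_count B q) q.

Let phi_spec q : q \in S ->
  [/\ prime (phi q), phi q \in A & prime_count A (phi q) = prime_count B q].
Proof.
case/and3P=> pr_q q_B le_qN; apply: prime_with_countP.
by rewrite count_dom // andbT (leq_ltn_trans _ (prime_count_lt pr_q q_B (prime_gt0 pr_q))).
Qed.

Let phi_le q : q \in S -> phi q <= q.
Proof.
move=> S_q; have [pr_phi phi_A count_phi] := phi_spec S_q.
case/and3P: S_q => _ _ le_qN; rewrite leqNgt; apply/negP.
by move/(prime_count_lt pr_phi phi_A); rewrite count_phi ltnNge count_dom.
Qed.

Let phi_inj : {in S &, injective phi}.
Proof.
move=> q q' S_q S_q' eq_phi.
have [_ _ count_q] := phi_spec S_q; have [_ _ count_q'] := phi_spec S_q'.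
have eq_count : prime_count B q = prime_count B q' by rewrite -count_q -count_q' eq_phi.
case/and3P: S_q => pr_q q_B _; case/and3P: S_q' => pr_q' q'_B _.
have [lt_qq' | lt_q'q | //] := ltngtP q q'.
  by have := prime_count_lt pr_q' q'_B lt_qq'; rewrite eq_count ltnn.
by have := prime_count_lt pr_q q_B lt_q'q; rewrite eq_count ltnn.
Qed.

Let pnat_bounded m : B.-nat m -> m <= N -> S.-nat m.
Proof.
move=> B_m le_mN; have m_gt0 : 0 < m by case/andP: B_m.
apply/pnatP => // q pr_q q_m; rewrite inE /= pr_q (leq_trans (dvdn_leq m_gt0 q_m)) // andbT.
by apply: pnatPpi B_m _; rewrite mem_primes pr_q m_gt0.
Qed.

Lemma mul_count_leq k : mul_count B k N <= mul_count A k N.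
Proof.
have phi_prime : {in S, forall q, prime (phi q)} by move=> q /phi_spec[].
apply: (sum1_leq_inj (f := transfer phi)) => [m lt_mN /andP[B_m le_kmN] | m m'].
  have S_m := pnat_bounded B_m lt_mN; have le_tm := transfer_leq phi_le S_m.
  have A_tm : A.-nat (transfer phi m) by apply: (pnat_transfer phi_prime _ S_m) => q /phi_spec[].
  by rewrite (leq_ltn_trans le_tm) // A_tm (leq_trans _ le_kmN) // leq_mul2l le_tm orbT.
move=> /andP[lt_mN /andP[B_m _]] /andP[lt_m'N /andP[B_m' _]].
by apply: transfer_inj; [exact: phi_prime | exact: phi_inj | exact: pnat_bounded ..].
Qed.

End PrimeCountDomination.

Lemma theta_prod_gt0 A n : 0 < theta_prod A n.
Proof. exact: prodn_cond_gt0 (fun k _ => ppow_prime_gt0 k). Qed.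

Lemma lambda_prod_gt0 A n : 0 < lambda_prod A n.
Proof. by apply: prodn_cond_gt0 => m /andP[]. Qed.

Lemma lambda_prod_leq A B n :
  (forall m, m <= n -> prime_count B m <= prime_count A m /\ theta_prod B m <= theta_prod A m) ->
  lambda_prod B n <= lambda_prod A n.
Proof.
move=> dom; rewrite lambda_prod_ppow (lambda_prod_ppow A) -(prod_theta_prod A A).
apply: (@leq_trans (\prod_(0 <= m < n.+1 | A.-nat m) theta_prod B (n %/ m))).
  rewrite prod_theta_prod; apply: leq_prod => k _.
  by rewrite leq_pexp2l ?ppow_prime_gt0 ?mul_count_leq // => m /dom[].
by apply: leq_prod => m _; have [] := dom _ (leq_div n m).
Qed.

(** * The real-valued sums *)

Definition residue_class (d a : Z) : nat_pred := [pred p | congr d a p].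

Lemma le_xP n (x : R) : reflect (INR n <= x)%R (le_x n x).
Proof. by rewrite /le_x; case: Rle_dec => ?; constructor. Qed.

Lemma le_x_INR m n : le_x n (INR m) = (n <= m).
Proof. by apply/le_xP/leP; [apply: INR_le | apply: le_INR]. Qed.

Lemma leq_upto_INR m : m <= upto (INR m).
Proof.
have [gt_up _] := archimed (INR m).
have : (Z.of_nat m < up (INR m))%Z by apply: lt_IZR; rewrite -INR_IZR_INZ.
by rewrite /upto Rabs_pos_eq; [lia | exact: pos_INR].
Qed.

Lemma floor_exists (x : R) : (0 <= x)%R ->
  exists2 N, (forall n, le_x n x = (n <= N)) & N <= upto x.
Proof.
move=> x_ge0; have [gt_up le_up] := archimed x.
have up_gt0 : (0 < up x)%Z by apply: lt_IZR; lra.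
exists (Z.to_nat (up x)).-1; last by rewrite /upto Rabs_pos_eq //; lia.
move=> n; apply/le_xP/idP => [le_nx | le_nN].
  have : (Z.of_nat n < up x)%Z by apply: lt_IZR; rewrite -INR_IZR_INZ; lra.
  lia.
have : (Z.of_nat n + 1 <= up x)%Z by lia.
by move/IZR_le; rewrite plus_IZR -INR_IZR_INZ; lra.
Qed.

Lemma rsum_upto_ext n f g :
  (forall k, k <= n -> f k = g k) -> rsum_upto n f = rsum_upto n g.
Proof.
elim: n => [|n IHn] eq_fg /=; first exact: eq_fg.
by rewrite IHn ?eq_fg // => k le_kn; rewrite eq_fg ?leqW.
Qed.

Lemma rsum_upto_trunc n d f :
  (forall k, n < k <= n + d -> f k = 0%R) -> rsum_upto (n + d) f = rsum_upto n f.
Proof.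
elim: d => [|d IHd] f0; first by rewrite addn0.
rewrite addnS /= IHd => [|k /andP[lt_nk le_kd]]; last by rewrite f0 //; lia.
by rewrite f0 ?Rplus_0_r //; lia.
Qed.

Lemma rsum_upto_count n (P : pred nat) :
  rsum_upto n (fun k => if P k then 1%R else 0%R) = INR (\sum_(0 <= k < n.+1 | P k) 1).
Proof.
elim: n => [|n IHn] /=; first by rewrite big_mkcond big_nat1; case: (P 0).
by rewrite IHn [in RHS]big_mkcond big_nat_recr //= -big_mkcond plus_INR; case: (P n.+1).
Qed.

Lemma rsum_upto_ln n (P : pred nat) (F : nat -> nat) : (forall k, P k -> 0 < F k) ->
  rsum_upto n (fun k => if P k then ln (INR (F k)) else 0%R)
  = ln (INR (\prod_(0 <= k < n.+1 | P k) F k)).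
Proof.
move=> F_gt0; elim: n => [|n IHn] /=.
  by rewrite big_mkcond big_nat1; case: (P 0); rewrite //= ln_1.
rewrite IHn [in RHS]big_mkcond big_nat_recr //= -big_mkcond mult_INR.
have prod_gt0 : (0 < INR (\prod_(0 <= k < n.+1 | P k) F k))%R.
  by apply/lt_0_INR/ltP/prodn_cond_gt0.
case P_n1: (P n.+1); last by rewrite Rmult_1_r Rplus_0_r.
by rewrite ln_mult //; apply/lt_0_INR/ltP/F_gt0.
Qed.

Section FloorSums.

Variables (x : R) (N : nat).
Hypothesis le_xE : forall n, le_x n x = (n <= N).
Hypothesis le_N_upto : N <= upto x.

Lemma rsum_upto_le_x (f F : nat -> R) :
  (forall n, f n = if le_x n x then F n else 0%R) -> rsum_upto (upto x) f = rsum_upto N F.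
Proof.
move=> def_f; rewrite -(subnKC le_N_upto) rsum_upto_trunc => [|n /andP[lt_Nn _]].
  by apply: rsum_upto_ext => n le_nN; rewrite def_f le_xE le_nN.
by rewrite def_f le_xE leqNgt lt_Nn.
Qed.

Lemma pi_apE d c : pi_ap x d c = INR (prime_count (residue_class d c) N).
Proof.
rewrite /pi_ap (rsum_upto_le_x (F := fun n => if prime n && congr d c n then 1%R else 0%R)).
  exact: rsum_upto_count.
by move=> n; case: le_x.
Qed.

Lemma theta_apE d c : theta_ap x d c = ln (INR (theta_prod (residue_class d c) N)).
Proof.
rewrite /theta_ap (rsum_upto_le_x (F := fun n =>
  if ppow_in (residue_class d c) n then ln (INR (ppow_prime n)) else 0%R)).
  by rewrite rsum_upto_ln // => k _; apply: ppow_prime_gt0.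
by move=> n; rewrite /ppow_in /ppow_prime; case: ppow_base => [p|]; case: le_x.
Qed.

Lemma lambda_apE d c : lambda_ap x d c = ln (INR (lambda_prod (residue_class d c) N)).
Proof.
rewrite /lambda_ap (rsum_upto_le_x (F := fun n =>
  if (residue_class d c).-nat n then ln (INR n) else 0%R)).
  by rewrite (@rsum_upto_ln _ _ (fun k => k)) // => k /andP[].
by move=> n; case: le_x.
Qed.

End FloorSums.

Lemma lambda_ap_lt0 (x : R) d c : (x < 0)%R -> lambda_ap x d c = 0%R.
Proof.
move=> x_lt0; have le_x_false n : le_x n x = false.
  by apply/negbTE/le_xP; have := pos_INR n; lra.
rewrite /lambda_ap -[upto x]add0n rsum_upto_trunc => [|n _]; last by rewrite le_x_false.
by rewrite /= le_x_false.
Qed.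

Lemma ln_INR_leP m n : 0 < m -> 0 < n -> reflect (ln (INR m) <= ln (INR n))%R (m <= n).
Proof.
move=> m_gt0 n_gt0; have [m_R n_R] := (lt_0_INR m (ltP m_gt0), lt_0_INR n (ltP n_gt0)).
apply: (iffP idP) => [/leP/le_INR le_mn | le_ln].
  have [lt_mn | ->] := Rle_lt_or_eq_dec _ _ le_mn; last exact: Rle_refl.
  exact/Rlt_le/ln_increasing.
rewrite leqNgt; apply/negP => /ltP/lt_INR/(ln_increasing _ _ n_R); lra.
Qed.

Unset Implicit Arguments.

Theorem corollary2 (d a b : Z) (x0 : R) :
  (1 <= d)%Z ->
  (forall x : R, (x <= x0)%R ->
     (pi_ap x d b <= pi_ap x d a)%R /\ (theta_ap x d b <= theta_ap x d a)%R) ->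
  forall x : R, (x <= x0)%R -> (lambda_ap x d b <= lambda_ap x d a)%R.
Proof.
move=> _ dominate x le_x_x0.
have [x_lt0 | x_ge0] := Rlt_or_le x 0.
  by rewrite !lambda_ap_lt0 //; apply: Rle_refl.
have [N le_xE le_N_upto] := floor_exists x_ge0.
rewrite !(lambda_apE le_xE le_N_upto); apply/ln_INR_leP; rewrite ?lambda_prod_gt0 //.
apply: lambda_prod_leq => m le_mN.
have /le_xP le_m_x : le_x m x by rewrite le_xE.
have [] := dominate (INR m) (Rle_trans _ _ _ le_m_x le_x_x0).
rewrite !(pi_apE (le_x_INR m) (leq_upto_INR m)) !(theta_apE (le_x_INR m) (leq_upto_INR m)).
by move=> /INR_le/leP -> /ln_INR_leP ->; rewrite ?theta_prod_gt0.
Qed.
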